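(* Fix $\mu\in\mathbb{C}$. Two rational functions $r_1(z),r_2(z)\in\mathbb{C}(z)^\times$ yield isomorphic $\mathfrak{sl}(2)$-modules $(\mathbb{C}(z),\rho^{(\mu)}_{r_1})\cong(\mathbb{C}(z),\rho^{(\mu)}_{r_2})$ if and only if there exist $\alpha_1,\dots,\alpha_n\in\mathbb{C}$ and $a_1,\dots,a_n\in\mathbb{Z}$ such that $$\frac{r_2(z)}{r_1(z)}=\prod_{i=1}^n\frac{z-\alpha_i}{z+a_i-\alpha_i}.$$
   Context: $\mathfrak{sl}(2)$ has basis $L_{-1}=f$, $L_0=-\tfrac12 h$, $L_1=-e$ for a Chevalley basis $e,f,h$ ($[e,f]=h$, $[h,e]=2e$, $[h,f]=-2f$). Let $\nabla$ be the $\mathbb{C}$-linear automorphism of $\mathbb{C}(z)$ given by $\nabla(g)(z)=g(z+1)$, and $\pi_\mu(z)=z(z-1)-\mu$. For $r(z)\in\mathbb{C}(z)^\times$, $\rho^{(\mu)}_r$ is the $\mathfrak{sl}(2)$-representation on the one-dimensional $\mathbb{C}(z)$-vector space $\mathbb{C}(z)$ given by $\rho^{(\mu)}_r(L_{-1})=\frac{\pi_\mu(z)}{r(z-1)}\circ\nabla^{-1}$, $\rho^{(\mu)}_r(L_0)=$ multiplication by $z$, $\rho^{(\mu)}_r(L_1)=r(z)\circ\nabla$ (a Casimir module of level $\mu$). *)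

From HB Require Import structures.
From mathcomp Require Import all_boot all_order all_algebra.
From mathcomp Require Import complex.
From mathcomp Require Import reals.
Set Implicit Arguments. Unset Strict Implicit. Unset Printing Implicit Defensive.
Import Order.TTheory GRing.Theory Num.Theory.
Local Open Scope ring_scope.

Definition Cz (R : realType) := {fraction {poly R[i]}}.

Definition shiftz (R : realType) (c : R[i]) (f : Cz R) : Cz R :=
  let x := repr f in
  (tofrac ((x.1 : {poly R[i]}) \Po ('X + c%:P))) / tofrac ((x.2 : {poly R[i]}) \Po ('X + c%:P)).

Definition nabla (R : realType) (f : Cz R) : Cz R := shiftz 1 f.
Definition nabla_inv (R : realType) (f : Cz R) : Cz R := shiftz (-1) f.

Definition cstz (R : realType) (c : R[i]) : Cz R := tofrac (c%:P).
Definition zz (R : realType) : Cz R := tofrac 'X.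

Definition pi_mu (R : realType) (mu : R[i]) : Cz R := zz R * (zz R - 1) - cstz mu.

Definition rho_Lm1 (R : realType) (mu : R[i]) (r : Cz R) (f : Cz R) : Cz R :=
  pi_mu mu / nabla_inv r * nabla_inv f.
Definition rho_L0 (R : realType) (f : Cz R) : Cz R := zz R * f.
Definition rho_L1 (R : realType) (r : Cz R) (f : Cz R) : Cz R := r * nabla f.

(* An isomorphism of sl(2)-modules (C(z), rho_{r1}) -> (C(z), rho_{r2}):
   a C-linear bijection intertwining the actions of the basis L_{-1}, L_0, L_1
   (hence of all of sl(2), by linearity). *)
Definition sl2_iso (R : realType) (mu : R[i]) (r1 r2 : Cz R) (phi : Cz R -> Cz R) : Prop :=
  [/\ (forall f g, phi (f + g) = phi f + phi g),
      (forall (c : R[i]) f, phi (cstz c * f) = cstz c * phi f) &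
      bijective phi] /\
  [/\ (forall f, phi (rho_Lm1 mu r1 f) = rho_Lm1 mu r2 (phi f)),
      (forall f, phi (rho_L0 f) = rho_L0 (phi f)) &
      (forall f, phi (rho_L1 r1 f) = rho_L1 r2 (phi f))].

Definition sl2_isomorphic (R : realType) (mu : R[i]) (r1 r2 : Cz R) : Prop :=
  exists phi : Cz R -> Cz R, sl2_iso mu r1 r2 phi.

From HB Require Import structures.
From mathcomp Require Import all_boot all_order all_algebra.
From mathcomp Require Import complex.
From mathcomp Require Import reals.
From mathcomp Require Import ring.
Import Order.TTheory GRing.Theory Num.Theory.
Local Open Scope ring_scope. Local Open Scope quotient_scope.
Set Implicit Arguments. Unset Strict Implicit. Unset Printing Implicit Defensive.

(* An isomorphism phi commutes with scalars and with L_0, which is multiplication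
   by z; hence it is C(z)-linear, i.e. multiplication by g = phi 1, and g != 0
   since phi is bijective.  Intertwining L_1 then says r2 (nabla g) = g r1, that
   is r2 / r1 = g / nabla g; conversely, for any such g, multiplication by g
   also intertwines L_{-1}, whatever mu, because applying nabla^-1 to the same
   relation gives exactly what L_{-1} requires.
   The ratios g / nabla g form a multiplicative group.  Over the algebraically
   closed field C, factoring the numerator and denominator of g into linear
   factors z - b writes g / nabla g as a product of (z - b) / (z + 1 - b) and
   their inverses; conversely (z - a) / (z + n - a) is the telescoping product
   of the (z - a + j) / (z - a + j + 1) for j < n, and negative exponents are
   handled by inversion. *)

Section FractionRepresentatives.
Variable K : idomainType.

Lemma tofrac_ratio (x : {ratio K}) :
  \pi_{fraction K} x = tofrac \n_x / tofrac \d_x.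
Proof.
apply: (canRL (mulfK _)); first by rewrite tofrac_eq0 denom_ratioP.
unlock tofrac; rewrite -[_ * _]FracField.pi_mul; apply/eqmodP.
rewrite /= FracField.equivfE /FracField.mulf /=.
by rewrite !numden_Ratio ?mulf_neq0 ?oner_neq0 ?denom_ratioP // !mulr1 mulrC.
Qed.

Lemma frac_reprE (f : {fraction K}) : f = tofrac (repr f).1 / tofrac (repr f).2.
Proof. by rewrite -tofrac_ratio reprK. Qed.

Lemma frac_ind (P : {fraction K} -> Prop) :
  (forall a b : K, b != 0 -> P (tofrac a / tofrac b)) -> forall f, P f.
Proof. by move=> Pab f; rewrite (frac_reprE f); apply/Pab/denom_ratioP. Qed.

End FractionRepresentatives.

Definition frac_map (K K' : idomainType) (s : K -> K') (f : {fraction K}) :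
  {fraction K'} := tofrac (s (repr f).1) / tofrac (s (repr f).2).

Section FracMap.
Variables (K K' : idomainType) (s : {rmorphism K -> K'}).
Hypothesis s_inj : injective s.

Let tofrac_s_eq0 a : (tofrac (s a) == 0) = (a == 0).
Proof. by rewrite tofrac_eq0 (raddf_eq0 _ s_inj). Qed.

Lemma frac_map_div a b : b != 0 ->
  frac_map s (tofrac a / tofrac b) = tofrac (s a) / tofrac (s b).
Proof.
move=> b_neq0; rewrite /frac_map; set x := repr _.
have x2_neq0 : x.2 != 0 := denom_ratioP x.
have cross : x.1 * b = a * x.2.
  apply/eqP; rewrite -tofrac_eq !tofracM -eqr_div ?tofrac_eq0 //.
  by rewrite -frac_reprE.
by apply/eqP; rewrite eqr_div ?tofrac_s_eq0 // -!tofracM -!rmorphM cross.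
Qed.

Lemma frac_map_tofrac a : frac_map s (tofrac a) = tofrac (s a).
Proof.
rewrite -[tofrac a]divr1 -tofrac1 frac_map_div ?oner_neq0 //.
by rewrite rmorph1 tofrac1 divr1.
Qed.

Lemma frac_mapD : {morph frac_map s : f g / f + g}.
Proof.
elim/frac_ind => a b b_neq0; elim/frac_ind => c d d_neq0.
rewrite addf_div ?tofrac_eq0 // -!tofracM -tofracD frac_map_div ?mulf_neq0 //.
rewrite !frac_map_div ?mulf_neq0 // addf_div ?tofrac_s_eq0 //.
by rewrite rmorphD !rmorphM tofracD !tofracM.
Qed.

Lemma frac_mapM : {morph frac_map s : f g / f * g}.
Proof.
elim/frac_ind => a b b_neq0; elim/frac_ind => c d d_neq0.
rewrite mulf_div -!tofracM !frac_map_div ?mulf_neq0 //.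
by rewrite mulf_div !rmorphM.
Qed.

Lemma frac_map_is_nmod_morphism : nmod_morphism (frac_map s).
Proof.
by split; [rewrite -tofrac0 frac_map_tofrac rmorph0 | exact: frac_mapD].
Qed.

Lemma frac_map_is_monoid_morphism : monoid_morphism (frac_map s).
Proof.
by split; [rewrite -tofrac1 frac_map_tofrac rmorph1 | exact: frac_mapM].
Qed.

End FracMap.

Definition mul_coboundary (F : fieldType) (s : F -> F) (f : F) : Prop :=
  exists2 h : F, h != 0 & f = h / s h.

Section MulCoboundary.
Variables (F : fieldType) (s : {rmorphism F -> F}).

Lemma mul_coboundary1 : mul_coboundary s 1.
Proof. by exists 1; [exact: oner_neq0 | rewrite rmorph1 divr1]. Qed.

Lemma mul_coboundaryM f g :
  mul_coboundary s f -> mul_coboundary s g -> mul_coboundary s (f * g).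
Proof.
move=> [h h_neq0 ->] [k k_neq0 ->]; exists (h * k); first exact: mulf_neq0.
by rewrite rmorphM mulf_div.
Qed.

Lemma mul_coboundaryV f : mul_coboundary s f -> mul_coboundary s f^-1.
Proof.
move=> [h h_neq0 ->]; exists h^-1; first by rewrite invr_eq0.
by rewrite fmorphV invrK invf_div mulrC.
Qed.

Lemma mul_coboundary_divP a b : b != 0 ->
  mul_coboundary s (a / b) <-> exists2 h, h != 0 & a * s h = h * b.
Proof.
move=> b_neq0; split=> -[h h_neq0 ab_h]; exists h => //; apply/eqP.
  by rewrite -eqr_div ?fmorph_eq0 // ab_h.
by rewrite eqr_div ?fmorph_eq0 // ab_h.
Qed.

End MulCoboundary.

Lemma frac_poly_linearE (K : idomainType)
    (phi : {fraction {poly K}} -> {fraction {poly K}}) :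
    {morph phi : f g / f + g} ->
    (forall c f, phi (tofrac c%:P * f) = tofrac c%:P * phi f) ->
    (forall f, phi (tofrac 'X * f) = tofrac 'X * phi f) ->
  forall f, phi f = f * phi 1.
Proof.
move=> phiD phiC phiX.
have phi0 : phi 0 = 0 by have := phiC 0 0; rewrite !rmorph0 !mul0r.
have phiP p f : phi (tofrac p * f) = tofrac p * phi f.
  elim/poly_ind: p f => [|p c IHp] f; first by rewrite rmorph0 !mul0r.
  by rewrite rmorphD rmorphM /= !mulrDl phiD phiC -mulrA IHp phiX mulrA.
elim/frac_ind => p q q_neq0; have tq_neq0 : tofrac q != 0 by rewrite tofrac_eq0.
apply: (mulfI tq_neq0); rewrite -phiP mulrCA divff // mulr1.
by rewrite -[tofrac p]mulr1 phiP mulr1 mulrA mulrCA divff // mulr1.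
Qed.

Lemma comp_poly_XaddC_inj (K : idomainType) (c : K) :
  injective (comp_poly ('X + c%:P)).
Proof.
by apply: raddf_inj => p /eqP; rewrite comp_poly2_eq0 ?size_XaddC // => /eqP.
Qed.

(* [shiftz c] is [frac_map (comp_poly ('X + c%:P))] by definition. *)
HB.instance Definition _ (R : realType) (c : R[i]) :=
  GRing.isNmodMorphism.Build (Cz R) (Cz R) (shiftz c)
    (frac_map_is_nmod_morphism (@comp_poly_XaddC_inj _ c)).
HB.instance Definition _ (R : realType) (c : R[i]) :=
  GRing.isMonoidMorphism.Build (Cz R) (Cz R) (shiftz c)
    (frac_map_is_monoid_morphism (@comp_poly_XaddC_inj _ c)).
HB.instance Definition _ (R : realType) :=
  GRing.RMorphism.copy (@nabla R) (shiftz 1).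
HB.instance Definition _ (R : realType) :=
  GRing.RMorphism.copy (@nabla_inv R) (shiftz (-1)).
HB.instance Definition _ (R : realType) :=
  GRing.RMorphism.copy (@cstz R) (@tofrac {poly R[i]} \o polyC).

Section CasimirModules.
Variable R : realType.
Local Notation C := R[i].
Local Notation F := (Cz R).
Local Notation z := (zz R).
Local Notation nabla := (@nabla R).

Lemma shiftz_tofrac (c : C) p :
  shiftz c (tofrac p) = tofrac (p \Po ('X + c%:P)).
Proof. exact: frac_map_tofrac (@comp_poly_XaddC_inj _ c) p. Qed.

Lemma shiftz_cstz (c a : C) : shiftz c (cstz a) = cstz a.
Proof. by rewrite /cstz shiftz_tofrac comp_polyC. Qed.

Lemma shiftz_zz (c : C) : shiftz c z = z + cstz c.
Proof. by rewrite /zz shiftz_tofrac comp_polyX rmorphD. Qed.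

Lemma shiftz_div (c : C) p q : q != 0 ->
  shiftz c (tofrac p / tofrac q) =
  tofrac (p \Po ('X + c%:P)) / tofrac (q \Po ('X + c%:P)).
Proof. exact: frac_map_div (@comp_poly_XaddC_inj _ c) p q. Qed.

Lemma shiftz0 (f : F) : shiftz 0 f = f.
Proof.
by elim/frac_ind: f => p q q_neq0; rewrite shiftz_div // addr0 !comp_polyXr.
Qed.

Lemma shiftzD (c d : C) (f : F) : shiftz (c + d) f = shiftz d (shiftz c f).
Proof.
elim/frac_ind: f => p q q_neq0.
rewrite !shiftz_div ?comp_poly2_eq0 ?size_XaddC // -!comp_polyA.
by rewrite comp_polyD comp_polyX comp_polyC -addrA -polyCD (addrC d).
Qed.

Lemma nabla_invK (f : F) : nabla_inv (nabla f) = f.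
Proof. by rewrite /nabla_inv /nabla -shiftzD subrr shiftz0. Qed.

Lemma nabla_cstz (c : C) : nabla (cstz c) = cstz c.
Proof. exact: shiftz_cstz. Qed.

Lemma nabla_zz : nabla z = z + 1.
Proof. by rewrite /nabla shiftz_zz rmorph1. Qed.

Lemma zz_addC_neq0 (c : C) : z + cstz c != 0.
Proof. by rewrite /zz /cstz -rmorphD tofrac_eq0 -size_poly_eq0 size_XaddC. Qed.

Definition shift_factor (al : C) (a : int) : F :=
  (z - cstz al) / (z + cstz (a%:~R - al)).

Definition shift_product (f : F) : Prop :=
  exists n (alpha : 'I_n -> C) (a : 'I_n -> int),
    f = \prod_(k < n) shift_factor (alpha k) (a k).

Lemma shift_factor0 al : shift_factor al 0 = 1.
Proof.
by rewrite /shift_factor sub0r rmorphN divff // -rmorphN zz_addC_neq0.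
Qed.

Lemma shift_factorS al (n : nat) :
  shift_factor al n.+1 = shift_factor al n * shift_factor (al - n%:R) 1.
Proof.
rewrite /shift_factor.
have -> : z - cstz (al - n%:R) = z + cstz ((n%:Z)%:~R - al).
  by rewrite -pmulrn !rmorphB /=; ring.
rewrite mulrA divfK ?zz_addC_neq0 //; congr (_ / (_ + _)).
by rewrite -pmulrn mulrS; congr cstz; ring.
Qed.

Lemma shift_factor1 al :
  shift_factor al 1 = (z - cstz al) / nabla (z - cstz al).
Proof.
by rewrite /shift_factor !rmorphB /= nabla_zz nabla_cstz mulr1z rmorph1 addrA.
Qed.

Lemma shift_factorV al a :
  (shift_factor al a)^-1 = shift_factor (al - a%:~R) (- a).
Proof.
rewrite /shift_factor invf_div intrN.
by congr (_ / _); rewrite !rmorphB /= ?rmorphN /=; ring.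
Qed.

Lemma shift_product1 : shift_product 1.
Proof. by exists 0%N, (fun _ => 0), (fun _ => 0); rewrite big_ord0. Qed.

Lemma shift_product_factor al a : shift_product (shift_factor al a).
Proof. by exists 1%N, (fun _ => al), (fun _ => a); rewrite big_ord1. Qed.

Lemma shift_productM f g :
  shift_product f -> shift_product g -> shift_product (f * g).
Proof.
move=> [m [alf [af ->]]] [n [alg [ag ->]]].
exists (m + n)%N.
exists (fun k => match split k with inl i => alf i | inr j => alg j end).
exists (fun k => match split k with inl i => af i | inr j => ag j end).
rewrite big_split_ord; congr (_ * _); apply: eq_bigr => i _.
  by rewrite -/(unsplit (inl i)) unsplitK.
by rewrite -/(unsplit (inr i)) unsplitK.
Qed.

Lemma shift_productV f : shift_product f -> shift_product f^-1.
Proof.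
move=> [n [al [a ->]]]; exists n, (fun k => al k - (a k)%:~R), (fun k => - a k).
by rewrite -prodfV; apply: eq_bigr => k _; rewrite shift_factorV.
Qed.

Lemma shift_product_poly_ratio p :
  p != 0 -> shift_product (tofrac p / nabla (tofrac p)).
Proof.
move=> p_neq0; have [rs ->] := closed_field_poly_normal p.
have lc_neq0 : cstz (lead_coef p) != 0 by rewrite fmorph_eq0 lead_coef_eq0.
rewrite -mul_polyC !rmorphM /= -/(cstz _) nabla_cstz -mulf_div divff // mul1r.
rewrite !rmorph_prod -prodf_div; apply: big_ind => //=.
- exact: shift_product1.
- exact: shift_productM.
move=> b _; rewrite rmorphB /= -/z -/(cstz b) -shift_factor1.
exact: shift_product_factor.
Qed.

Lemma shift_product_mul_coboundary f :
  mul_coboundary nabla f -> shift_product f.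
Proof.
case=> h + ->; elim/frac_ind: h => p q q_neq0.
rewrite mulf_eq0 invr_eq0 tofrac_eq0 negb_or => /andP[p_neq0 _].
have div_div (a b c d : F) : a / b / (c / d) = a / c * (b / d)^-1.
  by rewrite !invf_div !mulf_div [b * c]mulrC.
rewrite fmorph_div div_div.
by apply/shift_productM/shift_productV; apply: shift_product_poly_ratio.
Qed.

Lemma mul_coboundary_shift_factor al a :
  mul_coboundary nabla (shift_factor al a).
Proof.
have coboundary_nat n be : mul_coboundary nabla (shift_factor be n%:Z).
  elim: n be => [|n IHn] be.
    by rewrite shift_factor0; exact: mul_coboundary1.
  rewrite shift_factorS shift_factor1; apply: mul_coboundaryM => //.
  by exists (z - cstz (be - n%:R)); rewrite // -rmorphN zz_addC_neq0.
case: a => n; first exact: coboundary_nat.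
rewrite NegzE -[al](addrK ((n.+1%:Z)%:~R)) -shift_factorV.
exact/mul_coboundaryV/coboundary_nat.
Qed.

Lemma shift_productP f : shift_product f <-> mul_coboundary nabla f.
Proof.
split=> [[n [al [a ->]]]|]; last exact: shift_product_mul_coboundary.
apply: big_ind => [||k _]; [exact: mul_coboundary1 | exact: mul_coboundaryM |].
exact: mul_coboundary_shift_factor.
Qed.

Lemma sl2_iso_shift_relation mu r1 r2 phi : sl2_iso mu r1 r2 phi ->
  exists2 g, g != 0 & r2 * nabla g = g * r1.
Proof.
move=> [[phiD phiC [psi phiK _]] [_ phiL0 phiL1]].
have phiE := frac_poly_linearE phiD phiC phiL0.
exists (phi 1).
  apply: contra_neq (oner_neq0 F) => phi1_eq0; apply: (can_inj phiK).
  by rewrite phi1_eq0 phiE mul0r.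
by have := phiL1 1; rewrite /rho_L1 rmorph1 mulr1 phiE mulrC => <-.
Qed.

Lemma sl2_iso_mulr mu r1 r2 h : r1 != 0 -> r2 != 0 -> h != 0 ->
  r2 * nabla h = h * r1 -> sl2_iso mu r1 r2 ( *%R^~ h).
Proof.
move=> r1_neq0 r2_neq0 h_neq0 r1_r2; split; split.
- by move=> f g; rewrite mulrDl.
- by move=> c f; rewrite mulrA.
- by exists ( *%R^~ h^-1); [exact: mulfK h_neq0 | exact: divfK h_neq0].
- move=> f; rewrite /rho_Lm1 /= rmorphM /=.
  have shifted_r1_r2 : nabla_inv r2 * h = nabla_inv h * nabla_inv r1.
    by rewrite -[h in LHS]nabla_invK -rmorphM r1_r2 rmorphM.
  have h_ratio : h / nabla_inv r1 = nabla_inv h / nabla_inv r2.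
    apply/eqP; rewrite eqr_div ?fmorph_eq0; [|exact: r1_neq0|exact: r2_neq0].
    by rewrite mulrC shifted_r1_r2.
  transitivity (pi_mu mu * nabla_inv f * (h / nabla_inv r1)); first by ring.
  by rewrite h_ratio; ring.
- by move=> f; rewrite /rho_L0 mulrA.
- by move=> f; rewrite /rho_L1 /= rmorphM /= [RHS]mulrCA r1_r2; ring.
Qed.

Lemma sl2_isomorphicP mu r1 r2 : r1 != 0 -> r2 != 0 ->
  sl2_isomorphic mu r1 r2 <-> mul_coboundary nabla (r2 / r1).
Proof.
move=> r1_neq0 r2_neq0.
apply: iff_trans (iff_sym (mul_coboundary_divP _ _ r1_neq0)).
split=> [[phi /sl2_iso_shift_relation //]|[h h_neq0 r1_r2]].
by exists ( *%R^~ h); exact: sl2_iso_mulr r1_neq0 r2_neq0 h_neq0 r1_r2.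
Qed.

End CasimirModules.

Theorem theorem9p1 (R : realType) (mu : R[i]) (r1 r2 : Cz R) :
  r1 != 0 -> r2 != 0 ->
  (sl2_isomorphic mu r1 r2 <->
   exists (n : nat) (alpha : 'I_n -> R[i]) (a : 'I_n -> int),
     r2 / r1 = \prod_(k < n) ((zz R - cstz (alpha k)) / (zz R + cstz ((a k)%:~R - alpha k)))).
Proof.
move=> r1_neq0 r2_neq0; apply: iff_trans (sl2_isomorphicP mu r1_neq0 r2_neq0) _.
exact: iff_sym (shift_productP _).
Qed.
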